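(* Let $V$ be a finite dimensional real vector space, let $G$ be an abelian subgroup of $GL(V)$ and let $x\in V$ be a point with a somewhere dense $G$-orbit, i.e. the closure of $G(x)=\{gx: g\in G\}$ contains a non-empty open subset of $V$. Then the isotropy group $G_y=\{g\in G: gy=y\}$ is trivial for every point $y\in G(x)$. *)

From HB Require Import structures.
From mathcomp Require Import all_boot all_order all_algebra.
From mathcomp Require Import all_classical all_reals all_analysis.
Set Implicit Arguments. Unset Strict Implicit. Unset Printing Implicit Defensive.
Import Order.TTheory GRing.Theory Num.Theory.
Import numFieldTopology.Exports numFieldNormedType.Exports.
Local Open Scope classical_set_scope.
Local Open Scope ring_scope.

(* V = R^n, realised as column vectors 'cV[R]_n; GL(V) = invertible n x n
   matrices acting on the left by g *m v. *)

Definition is_GL_subgroup (R : realType) (n : nat) (G : set 'M[R]_n) : Prop :=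
  [/\ (forall g, G g -> g \in unitmx),
      G 1%:M,
      (forall g h, G g -> G h -> G (g *m h)) &
      (forall g, G g -> G (invmx g))].

Definition is_abelian_set (R : realType) (n : nat) (G : set 'M[R]_n) : Prop :=
  forall g h, G g -> G h -> g *m h = h *m g.

Definition orbit_set (R : realType) (n : nat) (G : set 'M[R]_n) (x : 'cV[R]_n)
  : set 'cV[R]_n := [set g *m x | g in G].

Definition somewhere_dense_orbit (R : realType) (n : nat) (G : set 'M[R]_n)
  (x : 'cV[R]_n) : Prop :=
  exists U : set 'cV[R]_n, [/\ open U, U !=set0 & U `<=` closure (orbit_set G x)].

Definition isotropy (R : realType) (n : nat) (G : set 'M[R]_n) (y : 'cV[R]_n)
  : set 'M[R]_n := [set g | G g /\ g *m y = y].

From HB Require Import structures.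
From mathcomp Require Import all_boot all_order all_algebra.
From mathcomp Require Import all_classical all_reals all_analysis.
Import Order.TTheory GRing.Theory Num.Theory.
Import numFieldTopology.Exports numFieldNormedType.Exports.
Local Open Scope classical_set_scope.
Local Open Scope ring_scope.
Set Implicit Arguments. Unset Strict Implicit.

(* If g in G fixes y = h x, then since G is abelian g fixes x, hence every
   point k x of the orbit.  So the linear map g - 1 vanishes on the orbit, by
   continuity on its closure, and so on a non-empty open set; a linear map
   vanishing on a non-empty open set is zero, i.e. g = 1. *)

Lemma mx_norm_entry_le (R : realFieldType) m n (B : 'M[R]_(m, n)) i j :
  `|B i j| <= `|B|.
Proof.
rewrite [leRHS]/Num.Def.normr /= mx_normrE.
exact: (le_bigmax _ (fun ij : 'I_m * 'I_n => `|B ij.1 ij.2|) (i, j)).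
Qed.

Lemma mx_norm_mulmx_le (R : realFieldType) m n p
    (A : 'M[R]_(m, n)) (B : 'M[R]_(n, p)) :
  `|A *m B| <= (\sum_i \sum_j `|A i j|) * `|B|.
Proof.
have A0 : 0 <= \sum_i \sum_j `|A i j| by rewrite !sumr_ge0 // => *; rewrite sumr_ge0.
rewrite [leLHS]/Num.Def.normr /= mx_normrE.
apply: bigmax_le => [|[i k] _ /=]; first by rewrite mulr_ge0.
rewrite mxE; apply: le_trans (ler_norm_sum _ _ _) _.
apply: le_trans (_ : \sum_j `|A i j| * `|B| <= _).
  by apply: ler_sum => j _; rewrite normrM ler_wpM2l ?mx_norm_entry_le.
rewrite -big_distrl ler_wpM2r //.
by rewrite (bigD1 i) //= lerDl sumr_ge0 // => ? _; rewrite sumr_ge0.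
Qed.

Lemma mulmx_continuous (R : realFieldType) m n p (A : 'M[R]_(m, n)) :
  continuous (mulmx A : 'M[R]_(n, p) -> 'M[R]_(m, p)).
Proof.
apply: bounded_linear_continuous; apply/linear_boundedP.
near=> r => B; apply: le_trans (mx_norm_mulmx_le A B) _.
rewrite ler_wpM2r //; near: r; apply: nbhs_pinfty_ge.
Unshelve. all: by end_near. Qed.

Lemma linear_eq0_on_open (R : numFieldType) (V W : normedModType R)
    (f : {linear V -> W}) (U : set V) :
  open U -> U !=set0 -> (forall u, U u -> f u = 0) -> forall v, f v = 0.
Proof.
move=> oU [u Uu] fU v.
have uvU : \forall t \near 0^'+, U (u + t *: v).
  have ct : {for 0, continuous (fun t : R => u + t *: v)}.
    apply: continuousD; [exact: cst_continuous | exact: continuousZr_tmp].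
  have : \forall t \near 0, U (u + t *: v).
    by apply: ct; rewrite /= scale0r addr0; exact: open_nbhs_nbhs.
  by apply: filterS => t Ut _.
near (0 : R)^'+ => t.
have : f (u + t *: v) = 0 by apply: fU; near: t.
rewrite linearD linearZ fU // add0r => /eqP.
by rewrite scaler_eq0 gt_eqF //= => /eqP.
Unshelve. all: by end_near. Qed.

Lemma continuous_eq0_closure (T : topologicalType) (R : numFieldType)
    (W : normedModType R) (f : T -> W) (S : set T) :
  continuous f -> (forall s, S s -> f s = 0) -> forall w, closure S w -> f w = 0.
Proof.
move=> cf fS w Sw.
have ker_closed : closed (f @^-1` [set 0]).
  apply: preimage_closed => [t _|]; first exact: cf.
  exact/accessible_closed_set1/hausdorff_accessible/norm_hausdorff.
have SK : S `<=` f @^-1` [set 0] by [].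
by have := closureS SK Sw; rewrite -(closure_id _).1.
Qed.

Lemma mulmx_cV_eq0 (R : pzSemiRingType) m n (A : 'M[R]_(m, n)) :
  (forall v : 'cV[R]_n, A *m v = 0) -> A = 0.
Proof.
move=> A0; apply/matrixP => i j.
have := congr1 (fun v : 'cV[R]_m => v i ord0) (A0 (delta_mx j 0)).
by rewrite -colE !mxE.
Qed.

Section AbelianMatrixGroup.
Variables (R : realType) (n : nat) (G : set 'M[R]_n).
Hypotheses (GLG : is_GL_subgroup G) (abG : is_abelian_set G).

Lemma abelian_fix_translate g h (x : 'cV[R]_n) :
  G g -> G h -> g *m (h *m x) = h *m x -> g *m x = x.
Proof.
case: GLG => Gunit _ _ _ Gg Gh.
rewrite mulmxA abG // -mulmxA => /(congr1 (mulmx (invmx h))).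
by rewrite !mulKmx ?Gunit.
Qed.

Lemma abelian_fix_orbit g (x w : 'cV[R]_n) :
  G g -> g *m x = x -> orbit_set G x w -> g *m w = w.
Proof. by move=> Gg gx [k Gk <-]; rewrite mulmxA abG // -mulmxA gx. Qed.

End AbelianMatrixGroup.

Theorem mainTheorem8 (R : realType) (n : nat) (G : set 'M[R]_n) (x : 'cV[R]_n) :
  is_GL_subgroup G -> is_abelian_set G -> somewhere_dense_orbit G x ->
  forall y, orbit_set G x y -> isotropy G y = [set 1%:M].
Proof.
move=> GLG abG [U [oU U0 Usub]] _ [h Gh <-].
apply/seteqP; split=> g; last first.
  by move=> ->; split; [case: GLG | rewrite mul1mx].
move=> [Gg ghx] /=.
have gx : g *m x = x := abelian_fix_translate GLG abG Gg Gh ghx.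
have g1_orbit w : orbit_set G x w -> (g - 1%:M) *m w = 0.
  by move=> xGw; rewrite mulmxBl mul1mx (abelian_fix_orbit abG Gg gx xGw) subrr.
have g1_U u : U u -> (g - 1%:M) *m u = 0.
  have cf : continuous (mulmx (g - 1%:M) : 'cV[R]_n -> 'cV[R]_n).
    exact: mulmx_continuous.
  by move/Usub; apply: (continuous_eq0_closure cf g1_orbit).
apply/eqP; rewrite -subr_eq0; apply/eqP/mulmx_cV_eq0.
exact: (linear_eq0_on_open (f := mulmx (g - 1%:M)) oU U0 g1_U).
Qed.
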